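(* Assume only that each finest set $I_{j_1,\dots,j_M}$ contains at least one observed index (the set $I_{\bm y_t}$ below), together with the uniformity conditions $J_m=J$, $r'_{j_1,\dots,j_m}=r'_m$. Let $B$ be an $n\times N'$ matrix with the MRA-lp block sparsity pattern, let $D$ be an $n\times n$ diagonal matrix with nonnegative diagonal entries and $D_{ii}=0$ for $i\notin I_{\bm y_t}$, let $\Lambda_{D}=\mathbf I_{N'}+B^\top DB$, let $L_D$ be its lower triangular Cholesky factor, and let $B_D=B(L_D^{-1})^\top$. Then: (a) for $p\ge q$, the $(M+1-p,M+1-q)$th block of $\Lambda_D$ (blocks induced by the column blocks $B^M,\dots,B^0$ of $B$) has size $J^pr'_p\times J^qr'_q$ and is block diagonal with $J^q$ diagonal blocks of size $J^{p-q}r'_p\times r'_q$, entries outside them being zero; (b) with $G=(V,E)$ the undirected graph on $v_1,\dots,v_{N'}$ whose adjacency matrix has 1 at every off-diagonal position inside one of the blocks described in (a) (and symmetric counterpart) and 0 elsewhere, if $1\le j<i\le N'$ and $(v_i,v_j)\notin E$ then $L_D[i,j]=L_D^{-1}[i,j]=0$; (c) $B_D$ has zero entries at every position outside the diagonal blocks $B_{j_1,\dots,j_m}$ ($m=0,\dots,M$) of the MRA-lp pattern; (d) the number of nonzero entries in each column of $L_D$ and of $L_D^{-1}$ is $\mathcal O(N)$, $N=\sum_{m=0}^M r'_m$.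
   Context: Grid indices $I_0=\{1,\dots,n\}$; $M\ge 0$, $J\ge 2$; multi-indices $(j_1,\dots,j_m)$, $1\le j_i\le J$ (empty multi-index $0$ for $m=0$); nested index sets $I_{j_1,\dots,j_m}$ with $I_0$ at $m=0$ and $I_{j_1,\dots,j_m}$ the disjoint union of $I_{j_1,\dots,j_m,j_{m+1}}$, $j_{m+1}=1,\dots,J$; indices ordered so that lexicographically larger finest multi-indices $(j_1,\dots,j_M)$ have all their indices larger. Integers $r'_m\ge 1$; $N'=\sum_{m=0}^M J^m r'_m$. MRA-lp block sparsity pattern: $B=(B^M\;\cdots\;B^0)$, where $B^m$ is an $n$-row block diagonal matrix whose diagonal blocks $B_{j_1,\dots,j_m}$, of size $|I_{j_1,\dots,j_m}|\times r'_m$, occupy rows $I_{j_1,\dots,j_m}$, in lexicographic order of $(j_1,\dots,j_m)$, all other entries being zero (the MRA-lp output of a symmetric positive definite matrix has this form). $I_{\bm y_t}\subseteq I_0$ is the set of grid indices at which observations are available at time $t$. In the paper's non-Gaussian filter, $D$ is the diagonal matrix of negative second derivatives $-\frac{d^2}{dx_{ti}^2}\log g_{ti}(y_{ti}\mid x_{ti})$ at observed indices (assumed nonnegative), zero elsewhere. *)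

From HB Require Import structures.
From mathcomp Require Import all_boot all_order all_algebra.
Set Implicit Arguments. Unset Strict Implicit. Unset Printing Implicit Defensive.
Import Order.TTheory GRing.Theory Num.Theory.
Local Open Scope ring_scope.

(* Conventions:
   - grid indices are 'I_n (0-based);
   - the finest multi-index (j_1,...,j_M) (1 <= j_k <= J) of a grid index i is
     encoded by the number  leaf i = sum_k (j_k - 1) J^(M-k)  in [0, J^M);
     hence i belongs to I_{j_1..j_m} iff  leaf i %/ J^(M-m)  is the base-J
     code of (j_1..j_m) (lexicographic order = numeric order of codes);
   - columns of B are 0-based; B = (B^M ... B^0), B^m has J^m r'_m columns,
     its block for code b (b-th multi-index in lexicographic order) occupies
     the columns coloff m + b*r'_m, ..., coloff m + (b+1)*r'_m - 1. *)

Definition ncols (J : nat) (r : nat -> nat) (m : nat) : nat := (J ^ m * r m)%N.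

Definition Nprime (M J : nat) (r : nat -> nat) : nat :=
  (\sum_(m < M.+1) ncols J r m)%N.

Definition Nsmall (M : nat) (r : nat -> nat) : nat := (\sum_(m < M.+1) r m)%N.

Definition coloff (M J : nat) (r : nat -> nat) (m : nat) : nat :=
  (\sum_(m.+1 <= l < M.+1) ncols J r l)%N.

Definition in_level (M J : nat) (r : nat -> nat) (c m : nat) : bool :=
  (m <= M)%N && (coloff M J r m <= c < coloff M J r m + ncols J r m)%N.

(* code (lexicographic rank) of the multi-index (j_1..j_m) of the diagonal
   block B_{j_1..j_m} containing column c of level m *)
Definition col_block (M J : nat) (r : nat -> nat) (c m : nat) : nat :=
  ((c - coloff M J r m) %/ r m)%N.

(* (i, c) lies in one of the diagonal blocks B_{j_1..j_m} of the MRA-lp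
   pattern, where lf = leaf i *)
Definition mra_pos (M J : nat) (r : nat -> nat) (lf c : nat) : bool :=
  [exists m : 'I_M.+1,
     in_level M J r c m && (lf %/ J ^ (M - m) == col_block M J r c m)%N].

Definition has_mra_pattern (R : ringType) (n M J : nat) (r : nat -> nat)
  (leaf : 'I_n -> nat) (B : 'M[R]_(n, Nprime M J r)) : Prop :=
  forall (i : 'I_n) (c : 'I_(Nprime M J r)),
    ~~ mra_pos M J r (leaf i) c -> B i c = 0.

Definition LambdaD (R : ringType) (n M J : nat) (r : nat -> nat)
  (B : 'M[R]_(n, Nprime M J r)) (D : 'M[R]_n) : 'M[R]_(Nprime M J r) :=
  1%:M + B^T *m D *m B.

Definition is_cholesky (R : numDomainType) (k : nat) (A L : 'M[R]_k) : Prop :=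
  [/\ (forall i j : 'I_k, (i < j)%N -> L i j = 0),
      (forall i : 'I_k, 0 < L i i) &
      L *m L^T = A].

(* (c, c') with c in level p, c' in level q, q <= p, lies in one of the
   J^q diagonal blocks (of size J^(p-q) r'_p x r'_q) of the
   (M+1-p, M+1-q)-th block of Lambda_D *)
Definition lam_block_pos (M J : nat) (r : nat -> nat) (c c' : nat) : bool :=
  [exists p : 'I_M.+1, exists q : 'I_M.+1,
     [&& (q <= p)%N, in_level M J r c p, in_level M J r c' q &
        ((c - coloff M J r p) %/ (J ^ (p - q) * r p)
           == (c' - coloff M J r q) %/ r q)%N]].

Definition mra_edge (M J : nat) (r : nat -> nat) (c c' : nat) : bool :=
  (c != c')%N && (lam_block_pos M J r c c' || lam_block_pos M J r c' c).

Definition col_nnz (R : ringType) (k : nat) (A : 'M[R]_k) (j : 'I_k) : nat :=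
  #|[set i : 'I_k | A i j != 0]|.

(* The blocks B_{j_1..j_m} form a J-ary tree under the prefix order of multi-indices
   (column i is a [col_ancestor] of column k when its block is a prefix of k's), and a
   row of B only meets the blocks on the root-to-leaf path of its grid index.
   Since D is diagonal, Lambda_D[c, c'] can only be nonzero when the blocks of the
   columns c and c' are comparable in this tree, which gives (a).  Columns are ordered
   finest level first, so of two ancestor columns of a common block the later one is an
   ancestor of the earlier one; with this, induction on the Cholesky
   recursion shows that L_D[i, j] <> 0 with j < i forces the block of i to be an
   ancestor of the block of j: the tree ordering produces no fill-in.  Inverting the
   triangular factor only composes such relations, so the same holds for L_D^-1 by
   transitivity, which gives (b).  The pattern of B is closed under passing to ancestor
   blocks, whence (c), and a column has at most sum_m r'_m = N ancestor columns (r'_m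
   per level), whence (d) with constant 1. *)

From HB Require Import structures.
From mathcomp Require Import all_boot all_order all_algebra.
From mathcomp Require Import zify.
Import Order.TTheory GRing.Theory Num.Theory.
Set Implicit Arguments. Unset Strict Implicit. Unset Printing Implicit Defensive.

Section TriangularFactorPatterns.
Local Open Scope ring_scope.
Variables (k : nat) (e : rel nat).

Lemma trig_factor_pattern (F : idomainType) (A L : 'M[F]_k) :
  (forall i j l, (j < i)%N -> e i l -> e j l -> e i j) ->
  is_trig_mx L -> (forall i, L i i != 0) -> L *m L^T = A ->
  (forall i j : 'I_k, (j < i)%N -> ~~ e i j -> A i j = 0) ->
  forall i j : 'I_k, (j < i)%N -> L i j != 0 -> e i j.
Proof.
move=> e_join /is_trig_mxP L_trig L_diag LLt A_pat i j.
have [m] := ubnP j; elim: m i j => // m IH i j /ltnSE le_jm lt_ji.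
apply: contraTT => not_eij; rewrite negbK.
have := A_pat i j lt_ji not_eij; rewrite -LLt mxE (bigD1 j) //= big1 ?addr0.
  by rewrite mxE => /eqP; rewrite mulf_eq0 (negbTE (L_diag j)) orbF.
move=> l ne_lj; rewrite mxE; case: (ltngtP l j) => [lt_lj|lt_jl|/val_inj eq_lj].
- apply/eqP; rewrite mulf_eq0; apply: contraNT not_eij.
  rewrite negb_or => /andP[nz_il nz_jl]; apply: (e_join _ _ l lt_ji).
    exact: IH (leq_trans lt_lj le_jm) (ltn_trans lt_lj lt_ji) nz_il.
  exact: IH (leq_trans lt_lj le_jm) lt_lj nz_jl.
- by rewrite (L_trig j l lt_jl) mulr0.
- by rewrite eq_lj eqxx in ne_lj.
Qed.

Lemma trig_unitmx (F : fieldType) (L : 'M[F]_k) :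
  is_trig_mx L -> (forall i, L i i != 0) -> L \in unitmx.
Proof.
by move=> L_trig L_diag; rewrite unitmxE det_trig // unitfE; apply/prodf_neq0.
Qed.

Lemma trig_inverse_pattern (F : fieldType) (L : 'M[F]_k) :
  (forall i : 'I_k, e i i) -> (forall i l j, e i l -> e l j -> e i j) ->
  is_trig_mx L -> (forall i, L i i != 0) ->
  (forall i j : 'I_k, (j < i)%N -> L i j != 0 -> e i j) ->
  forall i j : 'I_k, invmx L i j != 0 -> (j <= i)%N && e i j.
Proof.
move=> e_refl e_trans L_trig L_diag L_pat i j.
have /matrixP LX := mulmxV (trig_unitmx L_trig L_diag).
move/is_trig_mxP: L_trig => L_trig.
have [m] := ubnP i; elim: m i => // m IH i /ltnSE le_im.
apply: contraTT => not_ji; rewrite negbK.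
have ne_ij : i != j by apply: contra not_ji => /eqP <-; rewrite leqnn e_refl.
have := LX i j; rewrite !mxE (negbTE ne_ij) (bigD1 i) //= big1 ?addr0.
  by move/eqP; rewrite mulf_eq0 (negbTE (L_diag i)).
move=> l ne_li; case: (ltngtP l i) => [lt_li|lt_il|/val_inj eq_li].
- apply/eqP; rewrite mulf_eq0; apply: contraNT not_ji.
  rewrite negb_or => /andP[nz_il nz_lj].
  have /andP[le_jl e_lj] := IH l (leq_trans lt_li le_im) nz_lj.
  by rewrite (leq_trans le_jl (ltnW lt_li)) (e_trans _ _ _ (L_pat _ _ lt_li nz_il) e_lj).
- by rewrite L_trig ?mul0r.
- by rewrite eq_li eqxx in ne_li.
Qed.

End TriangularFactorPatterns.

Lemma card_ord_interval n lo hi : #|[set i : 'I_n | lo <= i < hi]| = minn hi n - lo.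
Proof.
rewrite -sum1dep_card big_mkcond /=; elim: n => [|n IH]; first by rewrite big_ord0 minn0.
by rewrite big_ord_recr /= IH; case: (leqP lo n); case: (ltnP n hi) => /=; lia.
Qed.

Lemma leq_card_bigcup (T I : finType) (A : I -> {set T}) :
  #|\bigcup_i A i| <= \sum_i #|A i|.
Proof.
elim/big_rec2: _ => [|i n U _ IH]; first by rewrite cards0.
by rewrite (leq_trans (leq_card_setU _ _).1) // leq_add2l.
Qed.

Section ColumnLevels.
Variables (M J : nat) (r : nat -> nat).

Definition level_end m := \sum_(m <= l < M.+1) ncols J r l.

Lemma coloffE m : coloff M J r m = level_end m.+1.
Proof. by []. Qed.

Lemma level_endS m : m <= M -> level_end m = ncols J r m + level_end m.+1.
Proof. by move=> le_mM; rewrite /level_end big_ltn. Qed.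

Lemma level_end0 : level_end 0 = Nprime M J r.
Proof. by rewrite /level_end big_mkord. Qed.

Lemma level_end_leq a b : a <= b -> level_end b <= level_end a.
Proof.
move=> le_ab; case: (leqP b M.+1) => [le_bM|lt_Mb].
  by rewrite /level_end (big_cat_nat le_ab le_bM) leq_addl.
by rewrite /level_end big_geq // ltnW.
Qed.

Lemma in_levelE c m :
  in_level M J r c m = (m <= M) && (level_end m.+1 <= c < level_end m).
Proof.
rewrite /in_level coloffE; case: (leqP m M) => //= le_mM.
by rewrite (level_endS le_mM) addnC.
Qed.

Lemma in_level_leM c m : in_level M J r c m -> m <= M.
Proof. by case/andP. Qed.

Lemma in_level_ltn c c' p q :
  in_level M J r c p -> in_level M J r c' q -> p < q -> c' < c.
Proof.
rewrite !in_levelE => /and3P[_ lo_c _] /and3P[_ _ hi_c'] lt_pq.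
exact: leq_trans hi_c' (leq_trans (level_end_leq lt_pq) lo_c).
Qed.

Lemma in_level_uniq c p q : in_level M J r c p -> in_level M J r c q -> p = q.
Proof.
move=> c_p c_q; case: (ltngtP p q) => // lt.
- by have := in_level_ltn c_p c_q lt; rewrite ltnn.
- by have := in_level_ltn c_q c_p lt; rewrite ltnn.
Qed.

Lemma in_level_leq c c' p q :
  in_level M J r c p -> in_level M J r c' q -> c <= c' -> q <= p.
Proof.
move=> c_p c'_q le_cc'; rewrite leqNgt; apply/negP => /(in_level_ltn c_p c'_q).
by rewrite ltnNge le_cc'.
Qed.

Lemma in_level_exists c : c < Nprime M J r -> exists m, in_level M J r c m.
Proof.
rewrite -level_end0 => lt_c.
suff: forall k, level_end k <= c -> exists m, in_level M J r c m.
  by apply; rewrite /level_end big_geq.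
elim=> [|k IH le_c]; first by rewrite leqNgt lt_c.
case: (leqP (level_end k) c) => [/IH //|lt_ck]; exists k.
rewrite in_levelE le_c lt_ck !andbT leqNgt; apply/negP => lt_Mk.
by move: lt_ck; rewrite /level_end big_geq.
Qed.

Lemma card_in_level p : p <= M ->
  #|[set c : 'I_(Nprime M J r) | in_level M J r c p]| = J ^ p * r p.
Proof.
move=> le_pM; have -> : [set c : 'I_(Nprime M J r) | in_level M J r c p] =
          [set c : 'I_(Nprime M J r) | level_end p.+1 <= c < level_end p].
  by apply/setP => c; rewrite !inE in_levelE le_pM.
rewrite card_ord_interval.
have := level_end_leq (leq0n p); rewrite level_end0 (level_endS le_pM) /ncols; lia.
Qed.

Lemma in_level_window c q : in_level M J r c q ->
  coloff M J r q + col_block M J r c q * r q <= c <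
  coloff M J r q + col_block M J r c q * r q + r q.
Proof.
rewrite /in_level /col_block /ncols => /and3P[_ lo_c hi_c].
have r_gt0 : 0 < r q by move: hi_c; case: (r q) => //; rewrite muln0 addn0 ltnNge lo_c.
have := divn_eq (c - coloff M J r q) (r q); have := ltn_pmod (c - coloff M J r q) r_gt0.
lia.
Qed.

End ColumnLevels.

Lemma divn_exp_sub d x a b c : a <= b -> b <= c ->
  x %/ d ^ (c - b) %/ d ^ (b - a) = x %/ d ^ (c - a).
Proof. by move=> le_ab le_bc; rewrite -divnMA -expnD; congr (_ %/ d ^ _); lia. Qed.

Section ColumnAncestors.
Variables (M J : nat) (r : nat -> nat).

Definition col_ancestor (i k : nat) : bool := lam_block_pos M J r k i.

Lemma col_ancestorP i k :
  reflect (exists p q, [/\ q <= p, in_level M J r k p, in_level M J r i q &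
             col_block M J r i q = col_block M J r k p %/ J ^ (p - q)])
          (col_ancestor i k).
Proof.
apply: (iffP existsP) => [[p /existsP[q /and4P[le_qp k_p i_q /eqP e_blk]]]|
                          [p [q [le_qp k_p i_q e_blk]]]].
  by exists p, q; split=> //; rewrite /col_block -e_blk mulnC divnMA.
have lt_pM : p < M.+1 := in_level_leM k_p.
have lt_qM : q < M.+1 := in_level_leM i_q.
exists (Ordinal lt_pM); apply/existsP; exists (Ordinal lt_qM).
by rewrite /= le_qp k_p i_q; apply/eqP; rewrite mulnC divnMA; exact: esym e_blk.
Qed.

Lemma col_ancestorE i k p q : in_level M J r i q -> in_level M J r k p ->
  col_ancestor i k =
    (q <= p) && (col_block M J r i q == col_block M J r k p %/ J ^ (p - q)).
Proof.
move=> i_q k_p; apply/col_ancestorP/andP => [[p' [q' [le k_p' i_q' e]]]|[le /eqP e]].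
  by rewrite (in_level_uniq k_p k_p') (in_level_uniq i_q i_q') e.
by exists p, q.
Qed.

Lemma col_ancestor_refl c : c < Nprime M J r -> col_ancestor c c.
Proof.
case/in_level_exists=> m c_m; apply/col_ancestorP; exists m, m.
by rewrite subnn expn0 divn1.
Qed.

Lemma col_ancestor_sym i j : j < i -> col_ancestor j i -> col_ancestor i j.
Proof.
move=> lt_ji /col_ancestorP[p [q [le_qp i_p j_q e_blk]]].
have e_pq : p = q by apply/eqP; rewrite eqn_leq le_qp (in_level_leq j_q i_p (ltnW lt_ji)).
subst q; apply/col_ancestorP; exists p, p.
by move: e_blk; rewrite subnn expn0 !divn1.
Qed.

Lemma col_ancestor_trans i k j :
  col_ancestor i k -> col_ancestor k j -> col_ancestor i j.
Proof.
move=> /col_ancestorP[p [q [le_qp k_p i_q e_i]]].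
move=> /col_ancestorP[p' [q' [le_q'p' j_p' k_q' e_k]]].
rewrite -(in_level_uniq k_p k_q') in le_q'p' e_k.
apply/col_ancestorP; exists p', q; split=> //; first exact: leq_trans le_q'p'.
by rewrite e_i e_k divn_exp_sub.
Qed.

Lemma col_ancestor_join i j k :
  j < i -> col_ancestor i k -> col_ancestor j k -> col_ancestor i j.
Proof.
move=> lt_ji /col_ancestorP[p [q [le_qp k_p i_q e_i]]].
move=> /col_ancestorP[p' [q' [le_q'p' k_p' j_q' e_j]]].
rewrite -(in_level_uniq k_p k_p') in le_q'p' e_j.
have le_qq' : q <= q' := in_level_leq j_q' i_q (ltnW lt_ji).
by apply/col_ancestorP; exists q', q; rewrite e_i e_j divn_exp_sub.
Qed.

Lemma mra_pos_comparable lf c c' : mra_pos M J r lf c -> mra_pos M J r lf c' ->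
  col_ancestor c c' || col_ancestor c' c.
Proof.
move=> /existsP[m /andP[c_m /eqP e_c]] /existsP[m' /andP[c'_m' /eqP e_c']].
have le_mM := in_level_leM c_m; have le_m'M := in_level_leM c'_m'.
case: (leqP m m') => [le_mm'|/ltnW le_m'm]; apply/orP; [left|right];
  apply/col_ancestorP.
- by exists m', m; rewrite -e_c -e_c' divn_exp_sub.
- by exists m, m'; rewrite -e_c -e_c' divn_exp_sub.
Qed.

Lemma mra_pos_ancestor lf c k :
  mra_pos M J r lf k -> col_ancestor c k -> mra_pos M J r lf c.
Proof.
move=> /existsP[m /andP[k_m /eqP e_k]] /col_ancestorP[p [q [le_qp k_p c_q e_c]]].
rewrite -(in_level_uniq k_m k_p) in le_qp e_c.
have le_mM := in_level_leM k_m; have lt_qM : q < M.+1 := in_level_leM c_q.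
by apply/existsP; exists (Ordinal lt_qM); rewrite /= c_q e_c -e_k divn_exp_sub ?eqxx.
Qed.

Lemma card_col_ancestors (c : 'I_(Nprime M J r)) :
  #|[set i : 'I_(Nprime M J r) | col_ancestor i c]| <= Nsmall M r.
Proof.
have [p c_p] := in_level_exists (ltn_ord c).
pose lo q := coloff M J r q + col_block M J r c p %/ J ^ (p - q) * r q.
pose window q := [set i : 'I_(Nprime M J r) | lo q <= i < lo q + r q].
apply: (@leq_trans #|\bigcup_(q < M.+1) window q|).
  apply/subset_leq_card/subsetP => i; rewrite inE.
  case/col_ancestorP=> p' [q [_ c_p' i_q e_blk]].
  rewrite -(in_level_uniq c_p c_p') in e_blk.
  have lt_qM : q < M.+1 := in_level_leM i_q.
  apply/bigcupP; exists (Ordinal lt_qM) => //.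
  by rewrite inE /lo -e_blk in_level_window.
apply: leq_trans (leq_card_bigcup _) _; apply: leq_sum => q _.
by rewrite card_ord_interval; lia.
Qed.

End ColumnAncestors.

Local Open Scope ring_scope.

Lemma LambdaD_incomparable (R : nzRingType) n M J r (leaf : 'I_n -> nat)
    (B : 'M[R]_(n, Nprime M J r)) (D : 'M[R]_n) (c c' : 'I_(Nprime M J r)) :
  has_mra_pattern leaf B -> is_diag_mx D ->
  ~~ col_ancestor M J r c c' -> ~~ col_ancestor M J r c' c -> LambdaD B D c c' = 0.
Proof.
move=> B_mra /is_diag_mxP D_diag not_cc' not_c'c.
have ne_cc' : c != c' by apply: contraNneq not_cc' => ->; apply: col_ancestor_refl.
rewrite /LambdaD !mxE (negbTE ne_cc') mulr0n add0r; apply: big1 => b _.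
rewrite mxE (bigD1 b) //= big1 ?addr0 => [|a ne_ab]; last by rewrite D_diag ?mulr0.
rewrite !mxE; have [->|nz_bc] := eqVneq (B b c) 0; first by rewrite !mul0r.
have [->|nz_bc'] := eqVneq (B b c') 0; first by rewrite mulr0.
have mra_c : mra_pos M J r (leaf b) c by apply: contraNT nz_bc => /B_mra ->.
have mra_c' : mra_pos M J r (leaf b) c' by apply: contraNT nz_bc' => /B_mra ->.
by move: (mra_pos_comparable mra_c mra_c'); rewrite (negbTE not_cc') (negbTE not_c'c).
Qed.

Lemma LambdaD_offblock (R : nzRingType) n M J r (leaf : 'I_n -> nat)
    (B : 'M[R]_(n, Nprime M J r)) (D : 'M[R]_n) (c c' : 'I_(Nprime M J r)) p q :
  has_mra_pattern leaf B -> is_diag_mx D -> (q <= p)%N ->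
  in_level M J r c p -> in_level M J r c' q ->
  ((c - coloff M J r p) %/ (J ^ (p - q) * r p) != (c' - coloff M J r q) %/ r q)%N ->
  LambdaD B D c c' = 0.
Proof.
move=> B_mra D_diag le_qp c_p c'_q; rewrite mulnC divnMA => ne_blk.
apply: (LambdaD_incomparable B_mra D_diag).
  rewrite (col_ancestorE c_p c'_q); apply/andP=> -[le_pq].
  have e_pq : p = q by apply/eqP; rewrite eqn_leq le_pq.
  by move: ne_blk; rewrite e_pq subnn expn0 !divn1 eq_sym => /negbTE ->.
by rewrite (col_ancestorE c'_q c_p) le_qp eq_sym.
Qed.

Section MRACholesky.
Variables (R : numFieldType) (n M J : nat) (r : nat -> nat) (leaf : 'I_n -> nat).
Variables (B : 'M[R]_(n, Nprime M J r)) (D : 'M[R]_n) (L : 'M[R]_(Nprime M J r)).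
Hypotheses (B_mra : has_mra_pattern leaf B) (D_diag : is_diag_mx D).
Hypothesis L_chol : is_cholesky (LambdaD B D) L.

Let L_trig : is_trig_mx L.
Proof. by case: L_chol => L_up _ _; apply/is_trig_mxP. Qed.

Let L_diag i : L i i != 0.
Proof. by case: L_chol => _ L_pos _; rewrite gt_eqF. Qed.

Lemma cholesky_col_ancestor (i j : 'I_(Nprime M J r)) :
  (j < i)%N -> L i j != 0 -> col_ancestor M J r i j.
Proof.
case: L_chol => _ _ LLt; apply: trig_factor_pattern L_trig L_diag LLt _ _ _ => //.
  exact: col_ancestor_join.
move=> {}i {}j lt_ji not_ij; apply: (LambdaD_incomparable B_mra D_diag not_ij).
exact: contra (col_ancestor_sym lt_ji) not_ij.
Qed.

Lemma invmx_cholesky_col_ancestor (i j : 'I_(Nprime M J r)) :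
  invmx L i j != 0 -> (j <= i)%N && col_ancestor M J r i j.
Proof.
apply: trig_inverse_pattern L_trig L_diag cholesky_col_ancestor _ _.
- by move=> c; apply: col_ancestor_refl.
- exact: col_ancestor_trans.
Qed.

Lemma mul_invmx_cholesky_tr_mra (i : 'I_n) (c : 'I_(Nprime M J r)) :
  ~~ mra_pos M J r (leaf i) c -> (B *m (invmx L)^T) i c = 0.
Proof.
move=> not_ic; rewrite !mxE; apply: big1 => k _; rewrite mxE.
have [->|nz_ik] := eqVneq (B i k) 0; first by rewrite mul0r.
have [->|/invmx_cholesky_col_ancestor/andP[_ anc_ck]] := eqVneq (invmx L c k) 0.
  by rewrite mulr0.
have i_k : mra_pos M J r (leaf i) k by apply: contraNT nz_ik => /B_mra ->.
by rewrite (mra_pos_ancestor i_k anc_ck) in not_ic.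
Qed.

Lemma col_nnz_cholesky (c : 'I_(Nprime M J r)) : (col_nnz L c <= Nsmall M r)%N.
Proof.
apply: leq_trans (card_col_ancestors c); apply/subset_leq_card/subsetP => i.
rewrite !inE; case: (ltngtP i c) => [lt_ic|lt_ci|/val_inj ->].
- by move/is_trig_mxP: L_trig => /(_ _ _ lt_ic) ->; rewrite eqxx.
- exact: cholesky_col_ancestor.
- by rewrite col_ancestor_refl.
Qed.

Lemma col_nnz_invmx_cholesky (c : 'I_(Nprime M J r)) :
  (col_nnz (invmx L) c <= Nsmall M r)%N.
Proof.
apply: leq_trans (card_col_ancestors c); apply/subset_leq_card/subsetP => i.
by rewrite !inE => /invmx_cholesky_col_ancestor/andP[].
Qed.

End MRACholesky.

Theorem proposition5 :
  exists C : nat,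
  forall (R : rcfType) (n M J : nat) (r : nat -> nat)
    (leaf : 'I_n -> nat) (obs : {set 'I_n})
    (B : 'M[R]_(n, Nprime M J r)) (D : 'M[R]_n) (L : 'M[R]_(Nprime M J r)),
    (2 <= J)%N ->
    (forall m : nat, (m <= M)%N -> (1 <= r m)%N) ->
    (forall i : 'I_n, (leaf i < J ^ M)%N) ->
    (forall i i' : 'I_n, (leaf i < leaf i')%N -> (i < i')%N) ->
    (forall b : nat, (b < J ^ M)%N -> exists2 i : 'I_n, i \in obs & leaf i = b) ->
    has_mra_pattern leaf B ->
    is_diag_mx D ->
    (forall i : 'I_n, 0 <= D i i) ->
    (forall i : 'I_n, i \notin obs -> D i i = 0) ->
    is_cholesky (LambdaD B D) L ->
    [/\
      (* (a) *)
      (forall p q : nat, (q <= p <= M)%N ->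
         #|[set c : 'I_(Nprime M J r) | in_level M J r c p]| = (J ^ p * r p)%N /\
         #|[set c : 'I_(Nprime M J r) | in_level M J r c q]| = (J ^ q * r q)%N /\
         (forall c c' : 'I_(Nprime M J r),
            in_level M J r c p -> in_level M J r c' q ->
            ((c - coloff M J r p) %/ (J ^ (p - q) * r p)
               != (c' - coloff M J r q) %/ r q)%N ->
            LambdaD B D c c' = 0)),
      (* (b) *)
      (forall i j : 'I_(Nprime M J r), (j < i)%N ->
         ~~ mra_edge M J r i j -> L i j = 0 /\ (invmx L) i j = 0),
      (* (c) *)
      (forall (i : 'I_n) (c : 'I_(Nprime M J r)),
         ~~ mra_pos M J r (leaf i) c -> (B *m (invmx L)^T) i c = 0) &
      (* (d) *)
      (forall c : 'I_(Nprime M J r),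
         (col_nnz L c <= C * Nsmall M r)%N /\
         (col_nnz (invmx L) c <= C * Nsmall M r)%N)].
Proof.
exists 1%N => R n M J r leaf obs B D L _ _ _ _ _ B_mra D_diag _ _ L_chol.
split.
- move=> p q /andP[le_qp le_pM]; split; first exact: card_in_level.
  split; first exact: card_in_level (leq_trans le_qp le_pM).
  move=> c c'; exact: LambdaD_offblock B_mra D_diag le_qp.
- move=> i j lt_ji; rewrite /mra_edge (gtn_eqF lt_ji) negb_or => /andP[_ not_ij].
  rewrite -/(col_ancestor M J r i j) in not_ij.
  split; apply/eqP; apply: contraNT not_ij.
  + exact/(cholesky_col_ancestor B_mra D_diag L_chol lt_ji).
  + by case/(invmx_cholesky_col_ancestor B_mra D_diag L_chol)/andP.
- exact: mul_invmx_cholesky_tr_mra B_mra D_diag L_chol.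
- move=> c; rewrite mul1n; split.
  + exact: col_nnz_cholesky B_mra D_diag L_chol c.
  + exact: col_nnz_invmx_cholesky B_mra D_diag L_chol c.
Qed.
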